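(* Let $d,K,n$ be positive integers with $K\ge 2$. With $\mathcal L_0$ and $\mathcal{WH}^-$ as defined below, there exists $\tau_0>0$ such that for every $\tau\in(0,\tau_0)$, $$\operatorname{argmin}_{(\mathbf W,\mathbf H)\in\mathrm{OB}(d,K)\times\mathrm{OB}(d,nK)}\mathcal L_0(\mathbf W,\mathbf H,\tau)\subseteq\mathcal{WH}^-.$$
   Context: $\mathrm{OB}(d,m)$ is the set of real $d\times m$ matrices with unit-norm columns; $\mathbf W$ has columns $\mathbf w_k$ ($k\in[K]$), $\mathbf H$ has columns $\mathbf h_{k,i}$ ($k\in[K],i\in[n]$). $\mathbf y_k$ is the $k$-th standard basis vector of $\mathbb R^K$; $\mathcal L_{\mathrm{CE}}(\mathbf z,\mathbf y_k,\tau)=-\log\big(\exp(z_k/\tau)/\sum_{j}\exp(z_j/\tau)\big)$. $\mathcal L_0(\mathbf W,\mathbf H,\tau)=\tau\log\sum_{i=1}^n\sum_{k=1}^K\mathcal L_{\mathrm{CE}}(\mathbf W^\top\mathbf h_{k,i},\mathbf y_k,\tau)$. $\mathcal{WH}^-=\{(\mathbf W,\mathbf H)\in\mathrm{OB}(d,K)\times\mathrm{OB}(d,nK):(\mathbf w_{k'}-\mathbf w_k)^\top\mathbf h_{k,i}\le0\ \forall i,k,\ k'\ne k\}$. *)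

From mathcomp Require Import all_boot all_order all_algebra.
From mathcomp Require Import all_classical all_reals all_analysis.
Set Implicit Arguments. Unset Strict Implicit. Unset Printing Implicit Defensive.
Import Order.TTheory GRing.Theory Num.Theory.
Local Open Scope ring_scope.

Section Defs.
Variable R : realType.

Definition isOB (d m : nat) (A : 'M[R]_(d, m)) : Prop :=
  forall j : 'I_m, \sum_(l < d) (A l j) ^+ 2 = 1.

(* Column h_{k,i} of H in OB(d, nK): columns indexed by pairs (k,i), k < K, i < n,
   via the bijection mxvec_index : 'I_K -> 'I_n -> 'I_(K*n). *)
Definition hcol (d K n : nat) (H : 'M[R]_(d, K * n)) (k : 'I_K) (i : 'I_n) : 'cV[R]_d :=
  col (mxvec_index k i) H.

(* Cross-entropy with temperature tau; the label y_k is the k-th standard basis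
   vector, so z^T y_k = z_k. *)
Definition LCE (K : nat) (z : 'cV[R]_K) (k : 'I_K) (tau : R) : R :=
  - ln (expR (z k 0 / tau) / \sum_(j < K) expR (z j 0 / tau)).

Definition L0 (d K n : nat) (W : 'M[R]_(d, K)) (H : 'M[R]_(d, K * n)) (tau : R) : R :=
  tau * ln (\sum_(i < n) \sum_(k < K) LCE (W^T *m hcol H k i) k tau).

Definition WHminus (d K n : nat) (W : 'M[R]_(d, K)) (H : 'M[R]_(d, K * n)) : Prop :=
  isOB W /\ isOB H /\
  forall (i : 'I_n) (k k' : 'I_K), k' != k ->
    ((col k' W - col k W)^T *m hcol H k i) 0 0 <= 0.

Definition isArgminL0 (d K n : nat) (tau : R) (W : 'M[R]_(d, K)) (H : 'M[R]_(d, K * n)) : Prop :=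
  isOB W /\ isOB H /\
  forall (W' : 'M[R]_(d, K)) (H' : 'M[R]_(d, K * n)),
    isOB W' -> isOB H' -> L0 W H tau <= L0 W' H' tau.

End Defs.

(* A violated inequality (w_k' - w_k)^T h_{k,i} > 0 makes the cross-entropy of
   sample (k,i) exceed ln 2, and for d = 1, where all entries are +-1, it even
   exceeds 2/tau.  On the other hand, collapsing every h_{k,i} onto w_k, with the
   w_k taken pairwise separated on a circle (d >= 2) or all equal to 1 (d = 1),
   gives a total cross-entropy O(tau), resp. nK ln K.  As L0 = tau ln (sum of
   cross-entropies) is increasing in the sum, a minimiser cannot violate an
   inequality once tau is below an explicit threshold. *)

From mathcomp Require Import all_boot all_order all_algebra.
From mathcomp Require Import all_classical all_reals all_analysis.
From mathcomp Require Import ring lra.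
Import Order.TTheory GRing.Theory Num.Theory.
Set Implicit Arguments.
Unset Strict Implicit.
Local Open Scope ring_scope.

Lemma ler_sum_term (R : numDomainType) (I : finType) (F : I -> R) i :
  (forall j, 0 <= F j) -> F i <= \sum_j F j.
Proof.
move=> F_ge0; rewrite (bigD1 i) //= lerDl.
by apply: sumr_ge0 => j _; apply: F_ge0.
Qed.

Section SoftmaxCrossEntropy.
Variables (R : realType) (K : nat).
Implicit Types (z : 'cV[R]_K) (k : 'I_K) (tau c : R).

Lemma LCE_lnE z k tau :
  LCE z k tau = ln (\sum_j expR ((z j 0 - z k 0) / tau)).
Proof.
have Se_gt0 : 0 < \sum_j expR (z j 0 / tau) / expR (z k 0 / tau).
  by rewrite -mulr_suml divr_gt0 ?expR_gt0 // (bigD1 k) //= ltr_wpDr ?expR_gt0 ?sumr_ge0.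
rewrite /LCE -invf_div mulr_suml lnV ?posrE // opprK.
by congr ln; apply: eq_bigr => j _; rewrite -expRB mulrBl.
Qed.

Lemma LCE_ln1D z k tau :
  LCE z k tau = ln (1 + \sum_(j | j != k) expR ((z j 0 - z k 0) / tau)).
Proof. by rewrite LCE_lnE (bigD1 k) //= subrr mul0r expR0. Qed.

Lemma LCE_ge_ln1D_expR z k k' tau : k' != k ->
  ln (1 + expR ((z k' 0 - z k 0) / tau)) <= LCE z k tau.
Proof.
move=> k'k; have e_ge0 j : 0 <= expR ((z j 0 - z k 0) / tau) by apply: expR_ge0.
rewrite LCE_ln1D ler_ln ?posrE ?ltr_wpDr ?sumr_ge0 ?expR_gt0 //.
by rewrite lerD2l (bigD1 k') //= lerDl sumr_ge0.
Qed.

Lemma LCE_gt0 z k k' tau : k' != k -> 0 < LCE z k tau.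
Proof.
move=> /(LCE_ge_ln1D_expR z tau); apply: lt_le_trans.
by rewrite ln_gt0 // ltrDl expR_gt0.
Qed.

Lemma LCE_gt_ln2 z k k' tau : k' != k -> 0 < tau ->
  z k 0 < z k' 0 -> ln 2 < LCE z k tau.
Proof.
move=> /(LCE_ge_ln1D_expR z tau) + tau_gt0 zkk'; apply: lt_le_trans.
rewrite ltr_ln ?posrE ?addr_gt0 ?expR_gt0 //.
by rewrite -[2]/(1 + 1) ltrD2l expR_gt1 divr_gt0 ?subr_gt0.
Qed.

Lemma LCE_gt_gap z k k' tau : k' != k ->
  (z k' 0 - z k 0) / tau < LCE z k tau.
Proof.
move=> /(LCE_ge_ln1D_expR z tau); apply: lt_le_trans.
by rewrite -{1}[_ / tau]expRK ltr_ln ?posrE ?addr_gt0 ?expR_gt0 // ltrDr.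
Qed.

Lemma LCE_le_lnK z k tau : 0 < tau ->
  (forall j, z j 0 <= z k 0) -> LCE z k tau <= ln K%:R.
Proof.
move=> tau_gt0 zk_max; have K_gt0 : (0 < K)%N by apply: leq_ltn_trans (ltn_ord k).
rewrite LCE_lnE ler_ln ?posrE ?ltr0n //; last first.
  by rewrite (bigD1 k) //= ltr_wpDr ?expR_gt0 ?sumr_ge0 // => j _; apply: expR_ge0.
rewrite -[K in K%:R]card_ord -sumr_const; apply: ler_sum => j _.
by rewrite expR_le1 pmulr_lle0 ?invr_gt0 // subr_le0.
Qed.

Lemma expRN_le_inv (x : R) : 0 < x -> expR (- x) <= x^-1.
Proof.
move=> x_gt0; rewrite expRN lef_pV2 ?posrE ?expR_gt0 //.
by apply: le_trans (expR_ge1Dx x); rewrite lerDr.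
Qed.

Lemma LCE_le_margin z k tau c : 0 < tau -> 0 < c ->
  (forall j, j != k -> z j 0 - z k 0 <= - c) -> LCE z k tau <= K%:R * (tau / c).
Proof.
move=> tau_gt0 c_gt0 margin.
have tc_ge0 : 0 <= tau / c by rewrite ltW ?divr_gt0.
rewrite LCE_ln1D; apply: le_trans (le_ln1Dx _) _.
  by apply: lt_le_trans (sumr_ge0 _ _) => [|j _]; rewrite ?ltrN10 ?expR_ge0.
apply: (@le_trans _ _ (\sum_(j | j != k) tau / c)).
  apply: ler_sum => j /margin zjk; rewrite -[tau / c]invf_div.
  apply: (@le_trans _ _ (expR (- (c / tau)))); last exact/expRN_le_inv/divr_gt0.
  by rewrite ler_expR -mulNr ler_pM2r ?invr_gt0.
by rewrite sumr_const cardC1 card_ord mulr_natl ler_wpMn2l // leq_pred.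
Qed.

End SoftmaxCrossEntropy.

Section ArgminL0.
Variables (R : realType) (d K n : nat).
Implicit Types (W : 'M[R]_(d, K)) (H : 'M[R]_(d, K * n)) (tau : R).

Definition ce_sum W H tau := \sum_(i < n) \sum_(k < K) LCE (W^T *m hcol H k i) k tau.

Lemma LCE_le_ce_sum W H tau i k : LCE (W^T *m hcol H k i) k tau <= ce_sum W H tau.
Proof.
have LCE_ge0 i' k' : 0 <= LCE (W^T *m hcol H k' i') k' tau.
  by rewrite LCE_ln1D ln_ge0 // lerDl sumr_ge0 // => j _; apply: expR_ge0.
apply: (@le_trans _ _ (\sum_(k' < K) LCE (W^T *m hcol H k' i) k' tau)).
  by apply: ler_sum_term => k'.
by rewrite /ce_sum; apply: ler_sum_term => i'; apply: sumr_ge0.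
Qed.

Lemma ce_sum_gt0 W H tau : (0 < n)%N -> (1 < K)%N -> 0 < ce_sum W H tau.
Proof.
move=> n_gt0 K_gt1; pose k0 := Ordinal (ltnW K_gt1); pose k1 := Ordinal K_gt1.
apply: lt_le_trans (LCE_le_ce_sum _ _ _ (Ordinal n_gt0) k0).
exact: (@LCE_gt0 _ _ _ k0 k1).
Qed.

Lemma ce_sum_le W H tau B :
  (forall i k, LCE (W^T *m hcol H k i) k tau <= B) -> ce_sum W H tau <= (n * K)%:R * B.
Proof.
move=> LCE_le; rewrite natrM -mulrA mulr_natl -[n in _ *+ n]card_ord -sumr_const.
apply: ler_sum => i _; rewrite mulr_natl -[K in _ *+ K]card_ord -sumr_const.
by apply: ler_sum => k _.
Qed.

Lemma isArgminL0_ce_sum_le tau W H W' H' : (0 < n)%N -> (1 < K)%N -> 0 < tau ->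
  isArgminL0 tau W H -> isOB W' -> isOB H' -> ce_sum W H tau <= ce_sum W' H' tau.
Proof.
move=> n_gt0 K_gt1 tau_gt0 [_ [_ minWH]] OB_W' OB_H'.
by have := minWH W' H' OB_W' OB_H'; rewrite /L0 ler_pM2l // ler_ln ?posrE ?ce_sum_gt0.
Qed.

Lemma col_diff_mulmxE (h : 'cV[R]_d) W k k' :
  ((col k' W - col k W)^T *m h) 0 0 = (W^T *m h) k' 0 - (W^T *m h) k 0.
Proof. by rewrite !mxE -sumrB; apply: eq_bigr => l _; rewrite !mxE mulrBl. Qed.

Lemma isArgminL0_WHminus tau W H W' H' : (0 < n)%N -> (1 < K)%N -> 0 < tau ->
  isArgminL0 tau W H -> isOB W' -> isOB H' ->
  (forall i k k', k' != k -> (W^T *m hcol H k i) k 0 < (W^T *m hcol H k i) k' 0 ->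
     ce_sum W' H' tau < LCE (W^T *m hcol H k i) k tau) ->
  WHminus W H.
Proof.
move=> n_gt0 K_gt1 tau_gt0 minWH OB_W' OB_H' violation_cost.
have [OB_W [OB_H _]] := minWH; do 2!split=> //.
move=> i k k' k'k; rewrite col_diff_mulmxE subr_le0 leNgt; apply/negP => zlt.
have := isArgminL0_ce_sum_le n_gt0 K_gt1 tau_gt0 minWH OB_W' OB_H'.
by apply/negP; rewrite -ltNge (lt_le_trans (violation_cost _ _ _ k'k zlt)) ?LCE_le_ce_sum.
Qed.

End ArgminL0.

Section CollapsedFeatures.
Variables (R : realType) (d K : nat).
Implicit Types (W : 'M[R]_(d, K)) (tau : R).

Definition collapse n W : 'M[R]_(d, K * n) := \matrix_l mxvec (\matrix_(k < K, i < n) W l k).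

Lemma hcol_collapse n W k i : hcol (collapse n W) k i = col k W.
Proof. by apply/colP => l; rewrite !mxE (mxvecE (\matrix_(k < K, i < n) W l k)) mxE. Qed.

Lemma isOB_collapse n W : isOB W -> isOB (collapse n W).
Proof.
move=> OB_W c; case/mxvec_indexP: c => k i; rewrite -(OB_W k).
by apply: eq_bigr => l _; rewrite mxE (mxvecE (\matrix_(k < K, i < n) W l k)) mxE.
Qed.

Lemma gram_diag W k : isOB W -> (W^T *m col k W) k 0 = 1.
Proof.
by move=> /(_ k) <-; rewrite mxE; apply: eq_bigr => l _; rewrite !mxE expr2.
Qed.

Lemma ce_sum_collapse_le_margin n W tau c : 0 < tau -> 0 < c -> isOB W ->
  (forall j k, j != k -> (W^T *m col k W) j 0 <= 1 - c) ->
  ce_sum W (collapse n W) tau <= (n * K)%:R * (K%:R * (tau / c)).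
Proof.
move=> tau_gt0 c_gt0 OB_W gram_le; apply: ce_sum_le => i k.
rewrite hcol_collapse; apply: LCE_le_margin => // j jk.
by rewrite gram_diag //; have := gram_le j k jk; lra.
Qed.

End CollapsedFeatures.

Section CircleFrame.
Variable R : realType.
Implicit Types (s t : R).

(* Rational parametrisation of the unit circle; by [circle_dot] the points at
   t = 0, 1, ..., K - 1 have pairwise inner products bounded away from 1. *)
Definition circle_x t : R := (1 - t ^+ 2) / (1 + t ^+ 2).
Definition circle_y t : R := 2 * t / (1 + t ^+ 2).

Lemma circle_den_gt0 t : 0 < 1 + t ^+ 2.
Proof. by rewrite ltr_wpDr ?sqr_ge0. Qed.

Lemma circle_norm t : circle_x t ^+ 2 + circle_y t ^+ 2 = 1.
Proof. by have := circle_den_gt0 t; rewrite /circle_x /circle_y => ?; field; lra. Qed.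

Lemma circle_dot s t : circle_x s * circle_x t + circle_y s * circle_y t =
  1 - 2 * (s - t) ^+ 2 / ((1 + s ^+ 2) * (1 + t ^+ 2)).
Proof.
have := circle_den_gt0 s; have := circle_den_gt0 t.
by rewrite /circle_x /circle_y => ? ?; field; lra.
Qed.

Definition circle_gap (K : nat) : R := 2 / (1 + K%:R ^+ 2) ^+ 2.

Lemma circle_gap_gt0 K : 0 < circle_gap K.
Proof. by rewrite divr_gt0 ?exprn_gt0 ?circle_den_gt0. Qed.

Lemma circle_gap_le K (s t : nat) : (s < K)%N -> (t < K)%N -> s != t ->
  circle_gap K <= 2 * (s%:R - t%:R) ^+ 2 / ((1 + s%:R ^+ 2) * (1 + t%:R ^+ 2)).
Proof.
move=> sK tK st.
have dist_ge1 : 1 <= (s%:R - t%:R : R) ^+ 2.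
  case: (ltngtP s t) st => // lt_st _; move: lt_st;
    by rewrite -(ler_nat R) -addn1 natrD => ?; nra.
have sq_le (m : nat) : (m < K)%N -> 1 + m%:R ^+ 2 <= 1 + K%:R ^+ 2 :> R.
  by move=> mK; rewrite lerD2l -!natrX ler_nat leq_exp2r // ltnW.
have den_le : (1 + s%:R ^+ 2) * (1 + t%:R ^+ 2) <= (1 + K%:R ^+ 2) ^+ 2 :> R.
  by rewrite expr2 ler_pM ?sq_le ?ltW ?circle_den_gt0.
have den_gt0 : 0 < (1 + s%:R ^+ 2) * (1 + t%:R ^+ 2) :> R.
  by rewrite mulr_gt0 ?circle_den_gt0.
rewrite /circle_gap ler_pdivrMr ?exprn_gt0 ?circle_den_gt0 // mulrAC ler_pdivlMr //.
nra.
Qed.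

Definition circle_frame d K : 'M[R]_(d.+2, K) := \matrix_(l, j)
  if l == 0 :> nat then circle_x j%:R else if l == 1 :> nat then circle_y j%:R else 0.

Lemma circle_frame_gram d K j k : ((circle_frame d K)^T *m col k (circle_frame d K)) j 0 =
  circle_x j%:R * circle_x k%:R + circle_y j%:R * circle_y k%:R.
Proof. by rewrite mxE 2!big_ord_recl big1 => [|l _]; rewrite !mxE ?mul0r ?addr0. Qed.

Lemma isOB_circle_frame d K : isOB (circle_frame d K).
Proof.
move=> j; rewrite -(circle_norm j%:R) 2!big_ord_recl big1 => [|l _].
  by rewrite !mxE addr0.
by rewrite !mxE expr0n.
Qed.

Lemma circle_frame_gram_le d K (j k : 'I_K) : j != k ->
  ((circle_frame d K)^T *m col k (circle_frame d K)) j 0 <= 1 - circle_gap K.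
Proof. by move=> jk; rewrite circle_frame_gram circle_dot lerD2l lerN2 circle_gap_le. Qed.

Lemma isArgminL0_WHminus_circle d K n tau (W : 'M[R]_(d.+2, K)) (H : 'M[R]_(d.+2, K * n)) :
  (0 < n)%N -> (1 < K)%N -> 0 < tau -> tau * ((n * K)%:R * K%:R) < circle_gap K * ln 2 ->
  isArgminL0 tau W H -> WHminus W H.
Proof.
move=> n_gt0 K_gt1 tau_gt0 tau_small minWH.
have OB_C : isOB (circle_frame d K) := @isOB_circle_frame d K.
apply: (isArgminL0_WHminus n_gt0 K_gt1 tau_gt0 minWH OB_C (isOB_collapse OB_C)).
move=> i k k' k'k zlt; apply: (lt_trans _ (LCE_gt_ln2 k'k tau_gt0 zlt)).
have gap_gt0 := circle_gap_gt0 K.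
have := ce_sum_collapse_le_margin n tau_gt0 gap_gt0 OB_C (@circle_frame_gram_le d K).
move=> /le_lt_trans; apply.
by rewrite !mulrA ltr_pdivrMr //; lra.
Qed.

End CircleFrame.

Section OneDimensional.
Variables (R : realType) (K n : nat).

Lemma isOB1_sign m (A : 'M[R]_(1, m)) j : isOB A -> A 0 j = 1 \/ A 0 j = -1.
Proof.
by move=> /(_ j); rewrite big_ord1 => /eqP; rewrite sqrf_eq1 => /orP[] /eqP; [left | right].
Qed.

Lemma isOB1_score_gap (W : 'M[R]_(1, K)) (H : 'M[R]_(1, K * n)) i k k' :
  isOB W -> isOB H ->
  (W^T *m hcol H k i) k 0 < (W^T *m hcol H k i) k' 0 ->
  (W^T *m hcol H k i) k' 0 - (W^T *m hcol H k i) k 0 = 2.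
Proof.
move=> OB_W OB_H; rewrite !mxE !big_ord1 !mxE.
case: (isOB1_sign k OB_W) => ->; case: (isOB1_sign k' OB_W) => ->;
  by case: (isOB1_sign (mxvec_index k i) OB_H) => ->; lra.
Qed.

Lemma isOB_const1 m : isOB (const_mx 1 : 'M[R]_(1, m)).
Proof. by move=> j; rewrite big_ord1 mxE expr1n. Qed.

Lemma ce_sum_collapse_const1_le tau : 0 < tau ->
  ce_sum (const_mx 1 : 'M[R]_(1, K)) (collapse n (const_mx 1)) tau <= (n * K)%:R * ln K%:R.
Proof.
move=> tau_gt0; apply: ce_sum_le => i k; rewrite hcol_collapse.
by apply: LCE_le_lnK => // j; rewrite !mxE !big_ord1 !mxE.
Qed.

Lemma isArgminL0_WHminus_row tau (W : 'M[R]_(1, K)) (H : 'M[R]_(1, K * n)) :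
  (0 < n)%N -> (1 < K)%N -> 0 < tau -> tau * ((n * K)%:R * ln K%:R) < 2 ->
  isArgminL0 tau W H -> WHminus W H.
Proof.
move=> n_gt0 K_gt1 tau_gt0 tau_small minWH; have [OB_W [OB_H _]] := minWH.
have OB_1 : isOB (const_mx 1 : 'M[R]_(1, K)) := @isOB_const1 K.
apply: (isArgminL0_WHminus n_gt0 K_gt1 tau_gt0 minWH OB_1 (isOB_collapse OB_1)).
move=> i k k' k'k zlt; apply: (le_lt_trans _ (LCE_gt_gap _ tau k'k)).
apply: le_trans (ce_sum_collapse_const1_le tau_gt0) _.
by rewrite (isOB1_score_gap OB_W OB_H zlt) ler_pdivlMr // mulrC ltW.
Qed.

End OneDimensional.

Theorem mainTheorem11 (R : realType) (d K n : nat) :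
  (0 < d)%N -> (2 <= K)%N -> (0 < n)%N ->
  exists tau0 : R, 0 < tau0 /\
    forall tau : R, 0 < tau -> tau < tau0 ->
      forall (W : 'M[R]_(d, K)) (H : 'M[R]_(d, K * n)),
        isArgminL0 tau W H -> WHminus W H.
Proof.
move=> d_gt0 K_gt1 n_gt0.
have nK_gt0 : (0 : R) < (n * K)%:R by rewrite ltr0n muln_gt0 n_gt0 ltnW.
case: d d_gt0 => [//|[|d]] _.
- have lnK_gt0 : (0 : R) < ln K%:R by rewrite ln_gt0 // ltr1n.
  exists (2 / ((n * K)%:R * ln K%:R)); split; first by rewrite divr_gt0 ?mulr_gt0.
  move=> tau tau_gt0; rewrite ltr_pdivlMr ?mulr_gt0 // => tau_small W H.
  exact: isArgminL0_WHminus_row.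
- have K_gt0 : (0 : R) < K%:R by rewrite ltr0n ltnW.
  exists (circle_gap R K * ln 2 / ((n * K)%:R * K%:R)).
  split; first by rewrite divr_gt0 ?mulr_gt0 ?circle_gap_gt0 // ln_gt0 // ltr1n.
  move=> tau tau_gt0; rewrite ltr_pdivlMr ?mulr_gt0 // => tau_small W H.
  exact: isArgminL0_WHminus_circle.
Qed.
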